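(* Let $m\ge 3$, let $C$ be a set of $m$ candidates, and let $T$ be the set of all $m!$ strict rankings of $C$. Let $w=(w_1,\dots,w_m)$ satisfy $1=w_1\ge w_2\ge\cdots\ge w_m=0$, and for $t\in T$, $\alpha\in C$ let $\sigma_t(\alpha)=w_i$, where $i$ is the position of $\alpha$ in $t$. Suppose $n$ voters each independently choose a ranking uniformly at random from $T$, let $N_t$ be the number of voters choosing $t$, and let $|\alpha|=\sum_{t\in T}N_t\sigma_t(\alpha)$. Then $$\mathbb{P}\bigl(\text{the scores } |\alpha|,\ \alpha\in C,\ \text{are pairwise distinct}\bigr)\to 1\qquad\text{as } n\to\infty.$$ *)

From HB Require Import structures.
From mathcomp Require Import all_boot all_order all_algebra all_fingroup.
From mathcomp Require Import all_classical all_reals all_analysis.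
Set Implicit Arguments. Unset Strict Implicit. Unset Printing Implicit Defensive.
Import Order.TTheory GRing.Theory Num.Theory.
Local Open Scope ring_scope.

(* Candidates: 'I_m.  Rankings: permutations t : {perm 'I_m}, read as
   t alpha = (0-based) position of candidate alpha in the ranking t.
   A profile of n voters: P : {ffun 'I_n -> {perm 'I_m}}. *)

Definition sigma (R : realType) (m : nat) (w : 'I_m -> R)
  (t : {perm 'I_m}) (alpha : 'I_m) : R := w (t alpha).

Definition Ncount (m n : nat) (P : {ffun 'I_n -> {perm 'I_m}})
  (t : {perm 'I_m}) : nat := #|[set v : 'I_n | P v == t]|.

Definition score (R : realType) (m n : nat) (w : 'I_m -> R)
  (P : {ffun 'I_n -> {perm 'I_m}}) (alpha : 'I_m) : R :=
  \sum_(t : {perm 'I_m}) (Ncount P t)%:R * sigma w t alpha.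

Definition distinct_scores (R : realType) (m n : nat) (w : 'I_m -> R)
  (P : {ffun 'I_n -> {perm 'I_m}}) : bool :=
  [forall alpha : 'I_m, forall beta : 'I_m,
     (alpha != beta) ==> (score w P alpha != score w P beta)].

(* Voters choose independently and uniformly: the profile is uniform on
   {ffun 'I_n -> {perm 'I_m}} (m!^n profiles). *)
Definition prob_distinct (R : realType) (m : nat) (w : 'I_m -> R) (n : nat) : R :=
  (#|[set P : {ffun 'I_n -> {perm 'I_m}} | distinct_scores w P]|%:R)
  / (#|{ffun 'I_n -> {perm 'I_m}}|%:R).

From HB Require Import structures.
From mathcomp Require Import all_boot all_order all_algebra all_fingroup.
From mathcomp Require Import all_classical all_reals all_analysis.
From mathcomp Require Import zify ring lra.
Import Order.TTheory GRing.Theory Num.Theory numFieldNormedType.Exports.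
Set Implicit Arguments. Unset Strict Implicit. Unset Printing Implicit Defensive.

(* For candidates a <> b the score difference |a| - |b| is the sum over the voters of
   X(t) = w(t a) - w(t b), with t uniform among the rankings and independent across voters.
   Composing with the transposition (a b) negates X, so X takes the values 1 and -1 equally
   often, and at least once (rank a first and b last).  Grouping the voters whose step is
   +-1, the number of profiles with a given sum is a nonnegative mixture of counts of
   +-1-walks of length k hitting a point.  Such a count is a single binomial coefficient
   C(k, j), and C(k, j)^4 (2k+1) <= C(2k, k)^2 (2k+1) <= 16^k, so it is o(2^k); the atoms with
   short walks only carry a geometrically vanishing share ((m! - e) / m!)^n of the mass,
   where e >= 1 is the number of rankings with X = 1.
   Hence P(|a| = |b|) -> 0, and a union bound over the pairs of candidates concludes. *)

Lemma mul_bin_central_succ k :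
  'C(k.+1.*2, k.+1) * k.+1 = 2 * k.*2.+1 * 'C(k.*2, k).
Proof.
have bin_sym : 'C(k.*2.+1, k) = 'C(k.*2.+1, k.+1).
  by rewrite -bin_sub; [congr binomial | ]; lia.
rewrite doubleS binS bin_sym mulnDl (mulnC _ k.+1) -mul_bin_diag /=; lia.
Qed.

Lemma central_bin_sqr_le k : 'C(k.*2, k) ^ 2 * k.*2.+1 <= 16 ^ k.
Proof.
elim: k => [//|k IHk].
rewrite -(@leq_pmul2r (k.+1 ^ 2)) ?expn_gt0 //.
have -> : 'C(k.+1.*2, k.+1) ^ 2 * k.+1.*2.+1 * k.+1 ^ 2
    = ('C(k.*2, k) ^ 2 * k.*2.+1) * (4 * k.*2.+1 * k.+1.*2.+1).
  by rewrite -mulnAC -expnMn mul_bin_central_succ; ring.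
have -> : 16 ^ k.+1 * k.+1 ^ 2 = 16 ^ k * (16 * k.+1 ^ 2) by rewrite expnS; ring.
apply: leq_mul => //; rewrite -!addnn; nia.
Qed.

Lemma bin_sqr_le_central k j : 'C(k, j) ^ 2 <= 'C(k.*2, k).
Proof.
have [jk | kj] := leqP j k; last by rewrite bin_small.
rewrite -addnn -binomial.Vandermonde (bigD1 (Ordinal (jk : j < k.+1))) //=.
rewrite bin_sub // -mulnn; exact: leq_addr.
Qed.

Lemma bin_pow4_le k j : 'C(k, j) ^ 4 * k.*2.+1 <= (2 ^ k) ^ 4.
Proof.
have -> : (2 ^ k) ^ 4 = 16 ^ k by rewrite -expnM mulnC expnM.
apply: leq_trans (central_bin_sqr_le k).
by rewrite (expnM _ 2 2) leq_mul2r leq_exp2r ?bin_sqr_le_central ?orbT.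
Qed.

Local Open Scope ring_scope.

Section Walks.
Variable R : numDomainType.
Implicit Types (k : nat) (d : R).

(* Number of +1/-1 sequences of length k with sum d: those with j steps +1 sum to 2j - k. *)
Definition walk_count k d : R :=
  \sum_(j < k.+1) (d == j.*2%:R - k%:R)%:R * 'C(k, j)%:R.

Lemma walk_count0 d : walk_count 0 d = (d == 0)%:R.
Proof. by rewrite /walk_count big_ord1 subr0 mulr1. Qed.

Lemma walk_countS k d : walk_count k.+1 d = walk_count k (d - 1) + walk_count k (d + 1).
Proof.
rewrite /walk_count big_ord_recl.
under eq_bigr => j _ do rewrite lift0 binS natrD mulrDr.
rewrite big_split /= addrA addrC; congr (_ + _).
  apply: eq_bigr => j _; congr (_%:R * _).
  rewrite -subr_eq0 -[in RHS]subr_eq0; congr (_ == 0).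
  by rewrite !doubleS -!muln2 !natrM -!natr1; ring.
rewrite [RHS]big_ord_recl big_ord_recr /= !bin0 (bin_small (ltnSn k)) mulr0 addr0.
congr (_ + _).
  congr (_%:R * _); rewrite -subr_eq0 -[in RHS]subr_eq0; congr (_ == 0).
  by rewrite -!natr1; ring.
apply: eq_bigr => j _; congr (_%:R * _).
rewrite -subr_eq0 -[in RHS]subr_eq0; congr (_ == 0).
by rewrite -!muln2 !natrM -!natr1; ring.
Qed.

Lemma walk_count_ge0 k d : 0 <= walk_count k d.
Proof. by apply: sumr_ge0 => j _; rewrite mulr_ge0. Qed.

Lemma walk_count_pow4_le k d : walk_count k d ^+ 4 * (k.*2.+1)%:R <= (2 ^ k)%:R ^+ 4.
Proof.
rewrite /walk_count.
have [j dj | no_j] := pickP (fun j : 'I_k.+1 => d == j.*2%:R - k%:R); last first.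
  by rewrite big1 ?expr0n ?mul0r ?exprn_ge0 // => j _; rewrite no_j mul0r.
rewrite (bigD1 j) //= dj mul1r big1 ?addr0.
  by rewrite -!natrX -natrM ler_nat bin_pow4_le.
move=> i ij; rewrite (eqP dj) (inj_eq (addIr _)) eqr_nat.
by rewrite (inj_eq double_inj) (inj_eq val_inj) eq_sym (negbTE ij) mul0r.
Qed.

Lemma walk_count_le k d : walk_count k d <= (2 ^ k)%:R.
Proof.
rewrite -(ler_pXn2r (isT : (0 < 4)%N)) ?nnegrE ?walk_count_ge0 //.
apply: le_trans (walk_count_pow4_le k d); rewrite ler_peMr ?exprn_ge0 ?walk_count_ge0 //.
by rewrite ler1n.
Qed.

Lemma walk_count_le_eps k d (eps : R) : 0 < eps -> 1 <= eps ^+ 4 * (k.*2.+1)%:R ->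
  walk_count k d <= eps * (2 ^ k)%:R.
Proof.
move=> eps_gt0 k_large.
rewrite -(ler_pXn2r (isT : (0 < 4)%N)) ?nnegrE ?walk_count_ge0 ?mulr_ge0 ?(ltW eps_gt0) //.
have k_gt0 : 0 < (k.*2.+1)%:R :> R by rewrite ltr0n.
rewrite -(ler_pM2r k_gt0).
apply: le_trans (walk_count_pow4_le k d) _.
by rewrite exprMn mulrAC ler_peMl ?exprn_ge0.
Qed.

End Walks.

Lemma walk_count_small (R : archiRealFieldType) (eps : R) : 0 < eps ->
  exists K, forall k d, (K <= k)%N -> walk_count k d <= eps * (2 ^ k)%:R.
Proof.
move=> eps_gt0; exists (Num.truncn (eps ^+ 4)^-1) => k d K_le_k.
apply: walk_count_le_eps => //.
have eps4_gt0 : 0 < eps ^+ 4 by rewrite exprn_gt0.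
rewrite -ler_pdivrMl // mulr1; apply/ltW/(lt_le_trans (truncnS_gt _)).
by rewrite ler_nat ltnS (leq_trans K_le_k) // -addnn leq_addr.
Qed.

Definition ffcons (T : Type) n (t : T) (Q : {ffun 'I_n -> T}) : {ffun 'I_n.+1 -> T} :=
  [ffun i => if unlift ord0 i is Some j then Q j else t].

Lemma big_ffunS (V : nmodType) (T : finType) n (F : {ffun 'I_n.+1 -> T} -> V) :
  \sum_(Q : {ffun 'I_n.+1 -> T}) F Q = \sum_(t : T) \sum_(Q : {ffun 'I_n -> T}) F (ffcons t Q).
Proof.
rewrite pair_big /= (reindex (fun p : T * {ffun 'I_n -> T} => ffcons p.1 p.2)) //=.
exists (fun Q : {ffun 'I_n.+1 -> T} => (Q ord0, [ffun j => Q (lift ord0 j)])).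
  move=> [t Q] _; rewrite /ffcons ffunE unlift_none; congr (_, _).
  by apply/ffunP => j; rewrite !ffunE liftK.
move=> Q _; apply/ffunP => i; rewrite ffunE.
by case: (unliftP ord0 i) => [j ->|->]; rewrite ?ffunE.
Qed.

Section SumHits.
Variables (R : numDomainType) (T : finType) (X : T -> R).

Definition sum_hits n c : R :=
  \sum_(Q : {ffun 'I_n -> T}) ((\sum_(v < n) X (Q v)) == c)%:R.

Lemma sum_hitsS n c : sum_hits n.+1 c = \sum_(t : T) sum_hits n (c - X t).
Proof.
rewrite /sum_hits big_ffunS; apply: eq_bigr => t _; apply: eq_bigr => Q _.
rewrite big_ord_recl /ffcons ffunE unlift_none.
under eq_bigr => i _ do rewrite ffunE liftK.
by rewrite [in RHS]eq_sym subr_eq eq_sym addrC.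
Qed.

Definition other_steps := [set t | (X t != 1) && (X t != -1)].

Variable e : nat.
Hypotheses (card_steps1 : #|[set t | X t == 1]| = e)
  (card_stepsN1 : #|[set t | X t == -1]| = e).

Let one_neqN1 : (1 : R) != -1.
Proof. by rewrite -subr_eq0 opprK -mulr2n mulrn_eq0 oner_eq0. Qed.

Lemma card_steps : #|T| = (e.*2 + #|other_steps|)%N.
Proof.
rewrite -(cardsC [set t | X t == 1]) card_steps1 -addnn -addnA; congr (_ + _)%N.
rewrite -(cardsID [set t | X t == -1]) -card_stepsN1; congr (_ + _)%N; apply: eq_card => t.
  by rewrite !inE andbC; case: (X t =P -1) => // ->; rewrite eq_sym one_neqN1.
by rewrite !inE andbC.
Qed.

Lemma sum_hitsS_balanced n c : sum_hits n.+1 c =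
  e%:R * (sum_hits n (c - 1) + sum_hits n (c + 1))
  + \sum_(t in other_steps) sum_hits n (c - X t).
Proof.
rewrite sum_hitsS (bigID (fun t => X t == 1)) /= [X in _ + X](bigID (fun t => X t == -1)) /=.
rewrite mulrDr addrA; congr (_ + _ + _).
- rewrite (eq_bigr (fun _ => sum_hits n (c - 1))) => [|t /eqP -> //].
  by rewrite -big_set sumr_const card_steps1 mulr_natl.
- rewrite (eq_bigl (fun t => X t == -1)) => [|t]; last first.
    by case: (X t =P -1) => [->|]; rewrite ?andbT ?andbF // eq_sym one_neqN1.
  rewrite (eq_bigr (fun _ => sum_hits n (c + 1))) => [|t /eqP ->]; last by rewrite opprK.
  by rewrite -big_set sumr_const card_stepsN1 mulr_natl.
- by apply: eq_bigl => t; rewrite !inE andbC.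
Qed.

(* An atom (k, s, c) of L stands for c copies of the +1/-1 walks of length k, shifted by s:
   the voters taking a +1/-1 step contribute to the walk, the others to the shift. *)
Lemma sum_hits_walk_mixture n : exists L : seq (nat * R * R),
  [/\ forall c, sum_hits n c = \sum_(a <- L) a.2 * walk_count a.1.1 (c - a.1.2),
      {in L, forall a, 0 <= a.2} &
      forall z, \sum_(a <- L) a.2 * (2 ^ a.1.1)%:R * z ^+ a.1.1
                = (e.*2%:R * z + #|other_steps|%:R) ^+ n].
Proof.
elim: n => [|n [L [hitsE L_ge0 weightsE]]].
  exists [:: (0%N, 0, 1)]; split => [c||z]; rewrite ?big_seq1 /= ?mul1r ?expr0 //.
  - rewrite walk_count0 subr0 /sum_hits.
    under eq_bigr do rewrite big_ord0.
    by rewrite sumr_const card_ffun card_ord expn0 eq_sym.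
  - by move=> a; rewrite inE => /eqP ->.
exists ([seq (a.1.1.+1, a.1.2, a.2 * e%:R) | a <- L] ++
        [seq (a.1.1, a.1.2 + X t, a.2) | a <- L, t <- enum other_steps]); split.
- move=> c; rewrite sum_hitsS_balanced big_cat big_map big_allpairs_dep /= !hitsE.
  under eq_bigr => t _ do rewrite hitsE.
  rewrite exchange_big /=; congr (_ + _).
    rewrite -big_split /= mulr_sumr; apply: eq_bigr => a _; rewrite walk_countS.
    by rewrite (addrAC c) (addrAC c 1); ring.
  apply: eq_bigr => a _; rewrite big_enum; apply: eq_bigr => t _.
  by rewrite opprD addrA [c - X t - _]addrAC.
- move=> a; rewrite mem_cat => /orP [/mapP [b bL ->] | /allpairsP [[b t] [bL _ ->]]] /=.
    by rewrite mulr_ge0 ?L_ge0.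
  exact: L_ge0.
- move=> z; rewrite big_cat big_map big_allpairs_dep /= exprS -weightsE.
  rewrite mulrDl !mulr_sumr; congr (_ + _); apply: eq_bigr => a _.
    by rewrite expnS natrM -mul2n natrM exprS; ring.
  by rewrite big_enum sumr_const mulr_natl.
Qed.

End SumHits.

Section BalancedStepsLimit.
Variables (R : archiRealFieldType) (T : finType) (X : T -> R) (e : nat).
Hypotheses (card_steps1 : #|[set t | X t == 1]| = e)
  (card_stepsN1 : #|[set t | X t == -1]| = e).

Lemma sum_hits_le n c K (eps : R) : 0 <= eps ->
  (forall k d, (K <= k)%N -> walk_count k d <= eps * (2 ^ k)%:R) ->
  sum_hits X n c <= eps * #|T|%:R ^+ n + (2 ^ K)%:R * (#|T| - e)%:R ^+ n.
Proof.
move=> eps_ge0 walk_small.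
have [L [hitsE L_ge0 weightsE]] := sum_hits_walk_mixture card_steps1 card_stepsN1 n.
(* The weight identity at z = 1 and z = 1/2 bounds the total weight and the weight
   of the short walks, whose counts are at most 2^K. *)
have -> : #|T|%:R = e.*2%:R * 1 + #|other_steps X|%:R :> R.
  by rewrite mulr1 -natrD -(card_steps card_steps1 card_stepsN1).
have -> : (#|T| - e)%:R = e.*2%:R * 2^-1 + #|other_steps X|%:R :> R.
  rewrite (card_steps card_steps1 card_stepsN1) -{1}addnn -addnA addKn natrD.
  by rewrite -muln2 natrM mulfK // pnatr_eq0.
rewrite -!weightsE hitsE !mulr_sumr -big_split big_seq [leRHS]big_seq /=.
apply: ler_sum => a aL.
have halves : (2 ^ a.1.1)%:R * 2^-1 ^+ a.1.1 = 1 :> R.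
  by rewrite natrX -exprMn mulfV ?expr1n // pnatr_eq0.
rewrite expr1n mulr1 -mulrA halves mulr1.
have weight_ge0 := L_ge0 a aL.
have K_term_ge0 : 0 <= (2 ^ K)%:R * a.2 by rewrite mulr_ge0.
have [K_le_k | k_lt_K] := leqP K a.1.1.
  have := ler_wpM2l weight_ge0 (walk_small _ (c - a.1.2) K_le_k); lra.
have walk_le_K : walk_count a.1.1 (c - a.1.2) <= (2 ^ K)%:R.
  by rewrite (le_trans (walk_count_le _ _)) // ler_nat leq_exp2l // ltnW.
have := ler_wpM2l weight_ge0 walk_le_K.
have := mulr_ge0 eps_ge0 (mulr_ge0 weight_ge0 (ler0n _ (2 ^ a.1.1))); lra.
Qed.

Local Open Scope classical_set_scope.

Lemma sum_hits_ratio_cvg0 c : (0 < e)%N ->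
  (fun n => sum_hits X n c / #|T|%:R ^+ n) @ \oo --> (0 : R).
Proof.
move=> e_gt0; apply/cvgrPdist_le => eps eps_gt0.
have eps2_gt0 : 0 < eps / 2 by rewrite divr_gt0.
have [K walk_small] := walk_count_small eps2_gt0.
have twoK_gt0 : 0 < (2 ^ K)%:R :> R by rewrite ltr0n expn_gt0.
have T_gt0 : (0 < #|T|)%N by rewrite (card_steps card_steps1 card_stepsN1); lia.
pose q := (#|T| - e)%:R / #|T|%:R : R.
have q_ge0 : 0 <= q by rewrite divr_ge0.
have q_lt1 : `|q| < 1.
  by rewrite ger0_norm // ltr_pdivrMr ?ltr0n // mul1r ltr_nat; lia.
have /cvgrPdist_le /(_ _ (divr_gt0 eps2_gt0 twoK_gt0)) := cvg_expr q_lt1.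
apply: filterS => n; rewrite !sub0r !normrN ger0_norm ?exprn_ge0 // => qn_small.
have Tn_gt0 : 0 < #|T|%:R ^+ n :> R by rewrite exprn_gt0 ?ltr0n.
have hits_ge0 : 0 <= sum_hits X n c by apply: sumr_ge0 => Q _; rewrite ler0n.
rewrite ger0_norm ?divr_ge0 ?exprn_ge0 // ler_pdivrMr //.
apply: le_trans (sum_hits_le n c (ltW eps2_gt0) walk_small) _.
move: qn_small; rewrite ler_pdivlMr // => qn_small.
have -> : (#|T| - e)%:R ^+ n = q ^+ n * #|T|%:R ^+ n.
  by rewrite -exprMn divfK // pnatr_eq0 -lt0n.
have := ler_wpM2r (ltW Tn_gt0) qn_small; lra.
Qed.

End BalancedStepsLimit.

Lemma cvg_sum0 (R : realType) (T : Type) (F : set_system T) (I : finType) (P : pred I)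
    (g : I -> T -> R) : Filter F ->
  (forall i, P i -> g i x @[x --> F] --> (0 : R))%classic ->
  (\sum_(i | P i) g i x @[x --> F] --> (0 : R))%classic.
Proof.
move=> FF g_cvg0.
rewrite -[X in (_ --> X)%classic](@big1 R 0 +%R I (index_enum I) P (fun=> 0)) //.
exact: (@cvg_big R I +%R 0 P add_continuous T F (index_enum I) g (fun=> 0) FF g_cvg0).
Qed.

Section ScoreGaps.
Variables (R : realType) (m : nat) (w : 'I_m -> R).

Definition score_gap (a b : 'I_m) (t : {perm 'I_m}) : R := w (t a) - w (t b).

Lemma score_sum n (P : {ffun 'I_n -> {perm 'I_m}}) a : score w P a = \sum_(v < n) w (P v a).
Proof.
rewrite /score (partition_big P predT) //=; apply: eq_bigr => t _.
rewrite (eq_bigr (fun _ => w (t a))) => [|v /eqP <- //].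
by rewrite -big_set sumr_const mulr_natl.
Qed.

Lemma scoreB n (P : {ffun 'I_n -> {perm 'I_m}}) a b :
  score w P a - score w P b = \sum_(v < n) score_gap a b (P v).
Proof. by rewrite !score_sum -sumrB. Qed.

Lemma score_gap_tpermM a b t : score_gap a b (tperm a b * t)%g = - score_gap a b t.
Proof. by rewrite /score_gap !permM tpermL tpermR opprB. Qed.

Lemma card_score_gapN1 a b :
  #|[set t | score_gap a b t == -1]| = #|[set t | score_gap a b t == 1]|.
Proof.
rewrite -(card_preimset _ (@mulgI _ (tperm a b))); apply: eq_card => t.
by rewrite !inE score_gap_tpermM eqr_opp.
Qed.

Lemma card_not_distinct_le n :
  (#|~: [set P : {ffun 'I_n -> {perm 'I_m}} | distinct_scores w P]|%:R : R)
    <= \sum_(a < m) \sum_(b < m | a != b) sum_hits (score_gap a b) n 0.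
Proof.
rewrite -sumr_const big_mkcond /sum_hits.
rewrite (_ : \sum_(a < m) _ = \sum_(P : {ffun 'I_n -> {perm 'I_m}})
    \sum_(a < m) \sum_(b < m | a != b) ((\sum_(v < n) score_gap a b (P v)) == 0)%:R); last first.
  by rewrite exchange_big; apply: eq_bigr => a _; rewrite exchange_big.
apply: ler_sum => P _; rewrite !inE.
have [//|] := boolP (distinct_scores w P).
  by move=> _; rewrite sumr_ge0 // => a _; rewrite sumr_ge0.
move=> /forallPn [a /forallPn [b]]; rewrite negb_imply negbK => /andP [ab /eqP eq_ab].
rewrite (bigD1 a) //= (bigD1 b) //= -scoreB eq_ab subrr eqxx -addrA lerDl.
by rewrite addr_ge0 ?sumr_ge0 // => ? _; rewrite sumr_ge0.
Qed.

Lemma prob_not_distinct_le n : 0 <= 1 - prob_distinct w n <=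
  \sum_(a < m) \sum_(b < m | a != b) sum_hits (score_gap a b) n 0 / #|{perm 'I_m}|%:R ^+ n.
Proof.
pose S := [set P : {ffun 'I_n -> {perm 'I_m}} | distinct_scores w P].
have profilesE : #|{perm 'I_m}|%:R ^+ n = #|S|%:R + #|~: S|%:R :> R.
  by rewrite -natrD cardsC card_ffun card_ord natrX.
have profiles_gt0 : 0 < #|{perm 'I_m}|%:R ^+ n :> R.
  by rewrite exprn_gt0 // ltr0n; apply/card_gt0P; exists 1%g.
have -> : 1 - prob_distinct w n = #|~: S|%:R / #|{perm 'I_m}|%:R ^+ n.
  rewrite /prob_distinct -/S card_ffun card_ord natrX profilesE; field.
  by rewrite -profilesE lt0r_neq0.
under eq_bigr do rewrite -mulr_suml.
rewrite divr_ge0 ?ler0n ?(ltW profiles_gt0) //= -mulr_suml.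
by rewrite ler_pM2r ?invr_gt0 ?card_not_distinct_le.
Qed.

Hypotheses (w_first : forall i : 'I_m, nat_of_ord i = 0%N -> w i = 1)
  (w_last : forall i : 'I_m, nat_of_ord i = m.-1 -> w i = 0).

Lemma card_score_gap1_gt0 a b : (1 < m)%N -> a != b ->
  (0 < #|[set t | score_gap a b t == 1%R]|)%N.
Proof.
move=> m_gt1 ab; have m_gt0 : (0 < m)%N by lia.
have m1_lt_m : (m.-1 < m)%N by lia.
pose first := Ordinal m_gt0; pose last := Ordinal m1_lt_m.
have first_last : first != last by apply/eqP => /(congr1 val) /=; lia.
pose b' := tperm a first b.
have b'_first : b' != first.
  by rewrite -[first](tpermL a) (inj_eq perm_inj) eq_sym.
have fix_first : tperm b' last first = first by rewrite tpermD // eq_sym.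
(* The ranking obtained by moving a to the top and then b to the bottom. *)
apply/card_gt0P; exists (tperm a first * tperm b' last)%g.
by rewrite inE /score_gap !permM tpermL -/b' tpermL fix_first w_first // w_last // subr0.
Qed.

End ScoreGaps.

Unset Implicit Arguments.
Local Open Scope classical_set_scope.

Theorem proposition3 (R : realType) (m : nat) (hm : (3 <= m)%N) (w : 'I_m -> R)
  (hw1 : forall i : 'I_m, nat_of_ord i = 0%N -> w i = 1)
  (hwm : forall i : 'I_m, nat_of_ord i = m.-1 -> w i = 0)
  (hwmono : forall i j : 'I_m, (i <= j)%N -> w j <= w i) :
  (fun n : nat => prob_distinct w n) @ \oo --> (1 : R^o).
Proof.
have tie_ratio_cvg0 a b : a != b ->
    (fun n => sum_hits (score_gap w a b) n 0 / #|{perm 'I_m}|%:R ^+ n) @ \oo --> (0 : R).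
  move=> ab; apply: (sum_hits_ratio_cvg0 (erefl _) (card_score_gapN1 w a b)).
  by apply: card_score_gap1_gt0 => //; lia.
have ties_cvg0 : (fun n => \sum_(a < m) \sum_(b < m | a != b)
    sum_hits (score_gap w a b) n 0 / #|{perm 'I_m}|%:R ^+ n) @ \oo --> (0 : R).
  by apply: cvg_sum0 => a _; apply: cvg_sum0 => b; exact: tie_ratio_cvg0.
have : (fun n => 1 - prob_distinct w n) @ \oo --> (0 : R).
  apply: (squeeze_cvgr _ (cvg_cst 0) ties_cvg0).
  by apply: nearW => n; exact: prob_not_distinct_le.
by move/(cvgB (cvg_cst (1 : R))); rewrite subr0; under eq_cvg do rewrite opprB addrC subrK.
Qed.
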